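(* (Furstenberg–Katznelson theorem for located words.) Let $A,B$ be finite disjoint sets and $x\notin A\cup B$ a variable. Let $F$ be a finite set of reduced strings in $A$. For every coloring of $\langle(X_n(A\cup B))\rangle$ with finitely many colors, there exists a basic sequence $(w_i)$ in $\langle(X_n(B))\rangle$ such that $x$ occurs in each $w_i$ and, for all $n_0<\cdots<n_k$ and $c_0,\dots,c_k\in A\cup B$, the color of $w_{n_0}[c_0]\cdots w_{n_k}[c_k]$ depends only on $\overline{c_0\cdots c_k}$, provided $\overline{c_0\cdots c_k}\in F$.
   Context: For a set $C$ with $x\notin C$, $X_n(C)=\{n\}\times(C\cup\{x\})$. For a sequence of sets $(X_n)$, $\langle(X_n)\rangle$ is the set of finite sequences $y_1\cdots y_k$ for which there are $m_1<\cdots<m_k$ with $y_i\in X_{m_i}$ (located words); it is a partial semigroup: the product of $y_1\cdots y_k$ and $z_1\cdots z_l$ is defined iff there are $m_1<\cdots<m_k<p_1<\cdots<p_l$ with $y_i\in X_{m_i}$, $z_j\in X_{p_j}$, and then it is the concatenation. Note $\langle(X_n(B))\rangle\subseteq\langle(X_n(A\cup B))\rangle$. A sequence $(w_i)$ is basic in $\langle(X_n(B))\rangle$ if $w_{i_1}\cdots w_{i_k}$ is defined for all $i_1<\cdots<i_k$. ''$x$ occurs in $w$'' means some entry of $w$ is of the form $(m,x)$; for such $w$ and $c\in A\cup B\cup\{x\}$, $w[c]$ is obtained by replacing every entry $(m,x)$ by $(m,c)$. A reduced string in $A$ is a (possibly empty) sequence $a_0\cdots a_k$ of elements of $A$ with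 $a_i\neq a_{i+1}$ for all $i<k$. For a sequence $c_0\cdots c_k$ of elements of $A\cup B$, $\overline{c_0\cdots c_k}$ is the reduced string obtained by deleting all entries in $B$ and then replacing each maximal run of a repeated element of $A$ by a single occurrence of it. *)

From mathcomp Require Import all_boot.
Set Implicit Arguments. Unset Strict Implicit. Unset Printing Implicit Defensive.

(* w is an element of <(X_n(C))>, where X_n(C) = {n} x (C \cup {x}). *)
Definition located_word (T : eqType) (x : T) (C : seq T) (w : seq (nat * T)) : bool :=
  [&& w != [::], sorted ltn (map fst w) & all (fun p => (p.2 \in C) || (p.2 == x)) w].

(* The product of located words is defined iff the concatenation is again a
   located word (positions strictly increase across the blocks). *)
Definition basic_seq (T : eqType) (x : T) (C : seq T) (w : nat -> seq (nat * T)) : Prop :=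
  (forall i, located_word x C (w i)) /\
  (forall s : seq nat, s != [::] -> sorted ltn s ->
     located_word x C (flatten (map w s))).

Definition occurs (T : eqType) (x : T) (w : seq (nat * T)) : bool :=
  has (fun p => p.2 == x) w.

Definition subst (T : eqType) (x : T) (w : seq (nat * T)) (c : T) : seq (nat * T) :=
  map (fun p => (p.1, if p.2 == x then c else p.2)) w.

Fixpoint collapse (T : eqType) (s : seq T) : seq T :=
  match s with
  | [::] => [::]
  | a :: t =>
      match collapse t with
      | [::] => [:: a]
      | b :: u => if a == b then b :: u else a :: b :: u
      end
  end.

(* overline(c_0 ... c_k): delete entries in B (i.e. keep those in A, as all
   c_i lie in A \cup B with A, B disjoint), then collapse runs. *)
Definition reduce_str (T : eqType) (A B : seq T) (cs : seq T) : seq T :=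
  collapse (filter (fun c => c \notin B) cs).

Definition reduced_in (T : eqType) (A : seq T) (s : seq T) : bool :=
  all (fun a => a \in A) s && sorted (fun a b => a != b) s.

Definition subst_prod (T : eqType) (x : T) (w : nat -> seq (nat * T))
  (ns : seq nat) (cs : seq T) : seq (nat * T) :=
  flatten [seq subst x (w p.1) p.2 | p <- zip ns cs].

From mathcomp Require Import all_boot.
From mathcomp Require Import boolp classical_sets filter.
Set Implicit Arguments. Unset Strict Implicit. Unset Printing Implicit Defensive.

(* Ultrafilters on sequences of pairs (m, c) that contain every tail (the
   sequences all of whose positions exceed some N) form a compact
   right-topological semigroup for p.q = {A | {u | {v | uv \in A} \in q} \in p};
   since almost every v lies beyond u, the products of ultrafilters living on
   located words live on located words.  Take a minimal idempotent p among
   those living on words over B, and an idempotent r with rp = pr = r living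
   on words in which x occurs.  Substituting c for x sends r to an idempotent
   r_c with the same property, and r_b = p for b \in B by the minimality of p;
   hence r_(c_0) ... r_(c_k) p depends only on the reduced string of
   c_0 ... c_k.  Give each reduced string s a colour that is large for
   r_(s_0) ... r_(s_l) p, and choose w_0, w_1, ... one at a time so that all
   products w_(n_0)[c_0] ... w_(n_k)[c_k] get this colour: at each step only
   finitely many r-large conditions have to be met. *)

Local Open Scope classical_set_scope.

(** * Ultrafilters *)

Section Ultrafilters.
Variable U : Type.
Implicit Types (F H : set_system U) (A : set U).

Lemma filter_notC F {FF : ProperFilter F} A : F A -> ~ F (~` A).
Proof.
move=> FA FnA; have : F (A `&` ~` A) by exact: filterI.
by rewrite setICr => /filter_not_empty.
Qed.

Lemma ultra_of_complement F :
  ProperFilter F -> (forall A, F A \/ F (~` A)) -> UltraFilter F.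
Proof.
move=> FF FC; split=> // G GF sFG; apply/seteqP; split=> [A GA|//].
by have [//|/sFG /(filter_notC GA)] := FC A.
Qed.

Definition fip H :=
  forall s : seq (set U), {in s, forall X, H X} -> exists u, {in s, forall X, X u}.

Lemma ultra_extend H : fip H -> exists2 p, UltraFilter p & H `<=` p.
Proof.
move=> fipH; have finIH : finI H id.
  move=> D sD; have [u hu] := fipH (finmap.enum_fset D) (fun X XD => set_mem (sD X XD)).
  by exists u => X /hu.
have [p [up sp]] := ultraFilterLemma (finI_filter finIH).
by exists p => // A HA; apply: sp; exists A => //; exact: finI_from1.
Qed.

Lemma filter_all_in (I : eqType) (s : seq I) (X : I -> set U) F : Filter F ->
  {in s, forall i, F (X i)} -> F [set u | {in s, forall i, X i u}].
Proof.
move=> FF; elim: s => [|j s IHs] Fs.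
  by apply: (filterS _ filterT) => u _ i.
have Fjs : F (X j `&` [set u | {in s, forall i, X i u}]).
  by apply: filterI; [exact: Fs (mem_head _ _)|apply: IHs => i si; apply: Fs; rewrite inE si orbT].
by apply: filterS Fjs => u [Xj Xs] i; rewrite inE => /predU1P [->|/Xs].
Qed.

Lemma ultra_fip p H : UltraFilter p -> H `<=` p -> fip H.
Proof.
move=> up Hp s sH; have ps : p [set u | {in s, forall X, X u}].
  by apply: filter_all_in => X /sH /Hp.
exact: filter_ex ps.
Qed.

Lemma ultra_color n (col : U -> 'I_n) p : UltraFilter p -> exists k, p (col @^-1` [set k]).
Proof.
move=> up; apply: contrapT => nocol.
have : p [set u | {in enum 'I_n, forall k, col u <> k}].
  apply: filter_all_in => k _.
  by case: (in_ultra_setVsetC (col @^-1` [set k]) up) => // pk; case: nocol; exists k.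
by case/filter_ex => u /(_ (col u) (mem_enum _ _)).
Qed.

Lemma filter_imply F (P : Prop) (X : set U) :
  Filter F -> (P -> F X) -> F [set u | P -> X u].
Proof.
move=> FF PX; have [/PX|nP] := pselect P; first by apply: filterS => u Xu _.
by apply: (filterS _ filterT) => u _ /nP.
Qed.

Definition ultras H : set (set_system U) := [set p | UltraFilter p /\ H `<=` p].

Lemma ultrasS H1 H2 : H1 `<=` H2 -> ultras H2 `<=` ultras H1.
Proof. by move=> sH p [up sp]; split=> // A /sH /sp. Qed.

(* The closed sets of the Stone space are the [ultras H]; [uclosed X] says
   that X is one of them. *)
Definition uclosed (X : set (set_system U)) := ultras (\bigcap_(y in X) y) `<=` X.

Lemma ultras_uclosed H : uclosed (ultras H).
Proof. by move=> z [uz sz]; split=> // A HA; apply: sz => y [_]; apply. Qed.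

Lemma uclosedE X : uclosed X -> X `<=` @UltraFilter U -> ultras (\bigcap_(y in X) y) = X.
Proof. by move=> Xcl Xu; apply/seteqP; split=> // y Xy; split=> [|A]; [exact: Xu|apply]. Qed.

End Ultrafilters.

Lemma fmap_ultra (U V : Type) (f : U -> V) (p : set_system U) :
  UltraFilter p -> UltraFilter (fmap f p).
Proof.
by move=> up; apply: ultra_of_complement => A; exact: (in_ultra_setVsetC (f @^-1` A) up).
Qed.

Lemma chain_cover (V : eqType) (C : set (set V)) (B : set V) (s : seq V) :
  C !=set0 -> total_on C subset ->
  {in s, forall X, (B `|` \bigcup_(G in C) G) X} -> exists2 G, C G & {in s, forall X, (B `|` G) X}.
Proof.
move=> [G0 CG0] Ctot; elim: s => [|X s IHs] sU; first by exists G0.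
have [G CG sG] := IHs (fun Y sY => sU Y (mem_behead (s := X :: s) sY)).
case: (sU X (mem_head _ _)) => [BX|[G' CG' G'X]].
  by exists G => // Y; rewrite inE => /predU1P [->|/sG]; [left|].
have [GG'|G'G] := Ctot G G' CG CG'.
  exists G' => // Y; rewrite inE => /predU1P [->|/sG [BY|GY]]; [by right|by left|].
  by right; apply: GG'.
exists G => // Y; rewrite inE => /predU1P [->|/sG //]; by right; apply: G'G.
Qed.

(** * The semigroup of ultrafilters on words *)

Section Semigroup.
Variable E : Type.
Local Notation S := (seq E).
Implicit Types (p q y z : set_system S) (A : set S) (H : set_system S).

Definition residual q A : set S := [set u | q [set v | A (u ++ v)]].

Definition umul p q : set_system S := [set A | p (residual q A)].

Lemma umul_filter p q : Filter p -> Filter q -> Filter (umul p q).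
Proof.
move=> pF qF; constructor; rewrite /umul /residual /=.
- by apply: (filterS _ filterT) => u _; exact: filterT.
- move=> A B pA pB; have pAB : p (residual q A `&` residual q B) by exact: filterI.
  by apply: filterS pAB => u [qA qB]; exact: filterI.
- by move=> A B sAB; apply: filterS => u; apply: filterS => v /sAB.
Qed.

Lemma umul_ultra p q : UltraFilter p -> UltraFilter q -> UltraFilter (umul p q).
Proof.
move=> up uq; have pqF : ProperFilter (umul p q).
  apply: Build_ProperFilter_ex; last by apply: umul_filter; exact: filter_filter.
  move=> A; rewrite /umul /residual /= => pA.
  have [u /filter_ex [v Auv]] := filter_ex pA; by exists (u ++ v).
apply: ultra_of_complement => A.
have [|pnA] := in_ultra_setVsetC (residual q A) up; first by left.
right; apply: filterS pnA => u nqA.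
by case: (in_ultra_setVsetC [set v | A (u ++ v)] uq).
Qed.

Lemma umulA p q z : umul (umul p q) z = umul p (umul q z).
Proof.
rewrite /umul /residual; apply/funext => A; congr p; apply/funext => u.
by congr q; apply/funext => v; congr z; apply/funext => w /=; rewrite catA.
Qed.

Lemma umul_eqr y q : UltraFilter y -> UltraFilter q ->
  (forall A, q A -> y (residual q A)) -> umul y q = q.
Proof. by move=> uy uq sq; have uyq := umul_ultra uy uq; exact: (@max_filter _ q uq). Qed.

Lemma fmap_umul (f : S -> S) p q : {morph f : u v / u ++ v} ->
  fmap f (umul p q) = umul (fmap f p) (fmap f q).
Proof.
move=> fcat; rewrite /umul /residual /fmap; apply/funext => A /=; congr p.
by apply/funext => u; congr q; apply/funext => v /=; rewrite fcat.
Qed.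

(* [R := id] yields minimal closed subsemigroups, [R := fun=> ultras H]
   minimal closed left ideals of [ultras H]. *)
Section MinimalClosedIdeal.
Variables (F0 : set_system S) (R : set (set_system S) -> set (set_system S)).
Hypothesis R_mono : forall K1 K2, K1 `<=` K2 -> R K1 `<=` R K2.
Hypothesis R_ultra : forall H, R (ultras H) `<=` @UltraFilter S.

Definition R_ideal (K : set (set_system S)) := forall y z, R K y -> K z -> K (umul y z).

Hypotheses (F0_neq0 : ultras F0 !=set0) (F0_ideal : R_ideal (ultras F0)).

Let chain_ideal (C : set (set_system S)) :
  (forall G, C G -> R_ideal (ultras (F0 `|` G))) ->
  R_ideal (ultras (F0 `|` \bigcup_(G in C) G)).
Proof.
move=> Cideal y z Ry [uz zU]; split=> [|X [F0X|[G CG GX]]].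
- exact: umul_ultra (R_ultra Ry) uz.
- have sub : F0 `<=` F0 `|` \bigcup_(G in C) G by exact: subsetUl.
  by have [_] := F0_ideal (R_mono (ultrasS sub) Ry) (ultrasS sub (conj uz zU)); apply.
- have sub : F0 `|` G `<=` F0 `|` \bigcup_(G in C) G.
    by move=> Y [F0Y|GY]; [left|right; exists G].
  by have [_] := Cideal G CG y z (R_mono (ultrasS sub) Ry) (ultrasS sub (conj uz zU)); apply; right.
Qed.

Lemma minimal_closed_ideal : exists M, [/\ F0 `<=` M, ultras M !=set0, R_ideal (ultras M) &
  forall N, M `<=` N -> ultras N !=set0 -> R_ideal (ultras N) -> N `<=` M].
Proof.
pose P H := ultras (F0 `|` H) !=set0 /\ R_ideal (ultras (F0 `|` H)).
have [M [[Mne Mideal] Mmax]] : exists M, P M /\ forall N, M `<` N -> ~ P N.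
  apply: Zorn_bigcup => C CP Ctot; split; last by apply: chain_ideal => G /CP [].
  have [->|/set0P Cne] := eqVneq C set0; first by rewrite bigcup_set0 setU0.
  have [p up sp] : exists2 p, UltraFilter p & F0 `|` \bigcup_(G in C) G `<=` p.
    apply: ultra_extend => s sU; have [G CG sG] := chain_cover Cne Ctot sU.
    by have [[q [uq sq]] _] := CP G CG; exact: ultra_fip uq sq s sG.
  by exists p.
exists (F0 `|` M); split=> //.
move=> N MN Nne Nideal X NX; apply: contrapT => MX.
have NE : F0 `|` N = N by apply: setUidr => Y F0Y; apply: MN; left.
apply: (Mmax N); last by rewrite /P NE.
by split=> [Y MY|NM]; [apply: MN; right|apply: MX; right; exact: NM].
Qed.

End MinimalClosedIdeal.

Lemma residual_cover G q z (s : seq (set S)) : Filter q -> Filter z ->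
  {in s, forall X, (G `|` [set residual q A | A in z]) X} ->
  exists sG : seq (set S), {in sG, forall X, G X} /\ exists2 A0, z A0 &
    forall u, {in sG, forall X, X u} -> residual q A0 u -> {in s, forall X, X u}.
Proof.
move=> qF zF; elim: s => [|X s IHs] sH.
  by exists [::]; split=> //; exists setT => //; exact: filterT.
have [sG [sGG [A0 zA0 hA0]]] := IHs (fun Y sY => sH Y (mem_behead (s := X :: s) sY)).
case: (sH X (mem_head _ _)) => [GX|[A zA <-]].
  exists (X :: sG); split=> [Y|]; first by rewrite inE => /predU1P [->|/sGG].
  exists A0 => // u sGu rA0 Y; rewrite inE => /predU1P [->|/hA0]; first exact: sGu (mem_head _ _).
  by apply=> // Y' sY'; apply: sGu; rewrite inE sY' orbT.
exists sG; split=> //; exists (A0 `&` A); first exact: filterI.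
move=> u sGu rA0A Y; rewrite inE => /predU1P [->|/hA0]; first by apply: filterS rA0A => v [].
by apply=> //; apply: filterS rA0A => v [].
Qed.

Lemma fip_residual G q z : UltraFilter q -> UltraFilter z ->
  \bigcap_(y in [set umul y q | y in ultras G]) y `<=` z ->
  fip (G `|` [set residual q A | A in z]).
Proof.
move=> uq uz zY s /(residual_cover _ _) [sG [sGG [A0 zA0 hA0]]].
suff [u [sGu rA0]] : exists u, {in sG, forall X, X u} /\ residual q A0 u.
  by exists u; apply: hA0.
(* Otherwise each y q with y containing G, and hence z, contains ~` A0. *)
apply: contrapT => none; apply: (filter_notC zA0); apply: zY => _ [y [uy Gy] <-].
have ysG : y [set u | {in sG, forall X, X u}] by apply: filter_all_in => X /sGG /Gy.
have [yr|ynr] := in_ultra_setVsetC (residual q A0) uy.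
  by have [u [sGu ru]] := filter_ex (filterI ysG yr); case: none; exists u.
apply: filterS ynr => u nr; by case: (in_ultra_setVsetC [set v | A0 (u ++ v)] uq).
Qed.

Lemma ultras_umulr_uclosed G q : UltraFilter q -> uclosed [set umul y q | y in ultras G].
Proof.
move=> uq z [uz zY]; have [y uy sy] := ultra_extend (fip_residual uq uz zY).
exists y; first by split=> // X GX; apply: sy; left.
have uyq := umul_ultra uy uq.
by apply: (@max_filter _ z uz) => // A zA; apply: sy; right; exists A.
Qed.

Lemma ellis_numakura (X : set (set_system S)) : uclosed X -> X `<=` @UltraFilter S ->
  X !=set0 -> (forall y z, X y -> X z -> X (umul y z)) -> exists2 q, X q & umul q q = q.
Proof.
move=> Xcl Xu [y0 Xy0] Xmul; have XE := uclosedE Xcl Xu.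
have X0 : ultras (\bigcap_(y in X) y) !=set0 by rewrite XE; exists y0.
have Xideal : R_ideal id (ultras (\bigcap_(y in X) y)) by rewrite XE.
have [M [sXM [q Mq] Mmul Mmax]] :=
  minimal_closed_ideal (fun _ _ sK => sK) (fun _ _ yH => yH.1) X0 Xideal.
have uq := Mq.1.
pose Y := [set umul y q | y in ultras M].
have YM : Y `<=` ultras M by move=> _ [y My <-]; exact: Mmul.
have YE : ultras (\bigcap_(y in Y) y) = Y.
  by apply: uclosedE (@ultras_umulr_uclosed M q uq) _ => _ [y [uy _] <-]; exact: umul_ultra.
have [y1 My1 qE] : Y q.
  suff /ultrasS sYM : \bigcap_(y in Y) y `<=` M by rewrite -YE; exact: sYM.
  apply: Mmax; rewrite ?YE.
  - by move=> A MA y /YM [_]; apply.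
  - by exists (umul q q), q.
  - move=> y _ /YM My [z Mz <-].
    by exists (umul y z); [exact: Mmul|rewrite umulA].
have NM : M `|` [set residual q A | A in q] `<=` M.
  apply: Mmax; first exact: subsetUl.
  - exists y1; split=> [|B [MB|[A qA <-]]]; [exact: My1.1|exact: My1.2|].
    by rewrite -qE in qA.
  - move=> y z [uy yN] [uz zN]; split; first exact: umul_ultra.
    have Myz : ultras M (umul y z).
      by apply: Mmul; split=> // A MA; [apply: yN|apply: zN]; left.
    have zq : umul z q = q by apply: umul_eqr => // A qA; apply: zN; right; exists A.
    move=> B [MB|[A qA <-]]; first exact: Myz.2.
    have : umul y (umul z q) A by rewrite zq; apply: yN; right; exists A.
    by rewrite -umulA.
exists q; first by rewrite -XE; apply: (ultrasS sXM).
by apply: umul_eqr => // A qA; apply: Mq.2; apply: NM; right; exists A.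
Qed.

Section ClosedSemigroup.
Variable H : set_system S.
Hypotheses (H_neq0 : ultras H !=set0)
  (H_mul : forall y z, ultras H y -> ultras H z -> ultras H (umul y z)).

Lemma minimal_idempotent : exists p, [/\ ultras H p, umul p p = p &
  forall e, ultras H e -> umul e e = e -> umul e p = e -> umul p e = e -> e = p].
Proof.
have [M [sHM Mne Mideal Mmax]] :=
  @minimal_closed_ideal H (fun _ => ultras H) (fun _ _ _ _ => id) (fun _ _ yH => yH.1) H_neq0 H_mul.
have MH : ultras M `<=` ultras H := ultrasS sHM.
have [p Mp pp] : exists2 p, ultras M p & umul p p = p.
  apply: ellis_numakura Mne _; first exact: ultras_uclosed.
    by move=> y [].
  by move=> y z /MH; exact: Mideal.
exists p; split=> //; first exact: MH.
move=> e He ee ep pe; have ue := He.1.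
have Me : ultras M e by rewrite -ep; exact: Mideal.
pose Y := [set umul y e | y in ultras H].
have YE : ultras (\bigcap_(y in Y) y) = Y.
  by apply: uclosedE (@ultras_umulr_uclosed H e ue) _ => _ [y [uy _] <-]; exact: umul_ultra.
have [y Hy pE] : Y p.
  suff /ultrasS sYM : \bigcap_(y in Y) y `<=` M by rewrite -YE; exact: sYM.
  apply: Mmax; rewrite ?YE.
  - by move=> A MA _ [y Hy <-]; have [_] := Mideal _ _ Hy Me; apply.
  - by exists (umul e e), e.
  - move=> y' _ Hy' [y Hy <-].
    by exists (umul y' y); [exact: H_mul|rewrite umulA].
by rewrite -pe -pE umulA ee.
Qed.

Lemma idempotent_below p : UltraFilter p -> umul p p = p ->
  (forall y, ultras H y -> ultras H (umul y p)) -> (forall y, ultras H y -> ultras H (umul p y)) ->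
  exists r, [/\ ultras H r, umul r r = r, umul r p = r & umul p r = r].
Proof.
move=> up pp Hp pH; have [y0 Hy0] := H_neq0.
have [_ [y Hy <-] uu] : exists2 w, [set umul y p | y in ultras H] w & umul w w = w.
  apply: ellis_numakura; first exact: ultras_umulr_uclosed.
  - by move=> _ [y [uy _] <-]; exact: umul_ultra.
  - by exists (umul y0 p), y0.
  - move=> _ _ [y1 Hy1 <-] [y2 Hy2 <-].
    by exists (umul (umul y1 p) y2); [apply: H_mul => //; exact: Hp|rewrite umulA].
set w := umul y p in uu *.
have wp : umul w p = w by rewrite /w umulA pp.
exists (umul p w); split.
- exact/pH/Hp.
- by rewrite umulA -[umul w (umul p w)]umulA wp uu.
- by rewrite umulA wp.
- by rewrite -umulA pp.
Qed.

End ClosedSemigroup.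

End Semigroup.

(** * Located words *)

Section Tails.
Variable T : eqType.
Local Notation S := (seq (nat * T)).
Implicit Types (u v : S) (D : set S) (p y z : set_system S).

Definition tail N : set S := [set u | all (fun e => N < e.1) u].

Definition maxpos u := \max_(e <- u) e.1.

Definition tail_ultras D := ultras (D |` range tail).

Definition cat_closed D1 D2 D3 :=
  forall u v, D1 u -> D2 v -> tail (maxpos u) v -> D3 (u ++ v).

Lemma tail_ultrasE D p : tail_ultras D p <-> [/\ UltraFilter p, p D & forall N, p (tail N)].
Proof.
split=> [[up sp]|[up pD pt]]; first by split=> // [|N]; apply: sp; [left|right; exists N].
by split=> // X [->|[N _ <-]].
Qed.

Lemma tail_ultrasS D1 D2 : D1 `<=` D2 -> tail_ultras D1 `<=` tail_ultras D2.
Proof.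
by move=> sD p /tail_ultrasE [up pD pt]; apply/tail_ultrasE; split=> //; exact: filterS pD.
Qed.

Lemma tail_ultras_umul D1 D2 D3 y z :
  cat_closed D1 D2 D3 -> tail_ultras D1 y -> tail_ultras D2 z -> tail_ultras D3 (umul y z).
Proof.
move=> cl /tail_ultrasE [uy yD yt] /tail_ultrasE [uz zD zt]; apply/tail_ultrasE; split.
- exact: umul_ultra.
- apply: filterS yD => u Du; have zDt : z (D2 `&` tail (maxpos u)) by exact: filterI.
  by apply: filterS zDt => v [Dv tv]; exact: cl.
- move=> N; apply: filterS (yt N) => u tu; apply: filterS (zt N) => v tv.
  by rewrite /tail /= all_cat; apply/andP.
Qed.

Lemma tail_ultras_fmap f D1 D2 p : (forall u, D1 u -> D2 (f u)) ->
  (forall N u, tail N u -> tail N (f u)) -> tail_ultras D1 p -> tail_ultras D2 (fmap f p).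
Proof.
move=> fD ft /tail_ultrasE [up pD pt]; apply/tail_ultrasE; split=> [|//|N]; rewrite ?fmapE.
- exact: fmap_ultra.
- by apply: filterS pD => u; exact: fD.
- by apply: filterS (pt N) => u; exact: ft.
Qed.

Lemma fmap_id_on f D p : tail_ultras D p -> (forall u, D u -> f u = u) -> fmap f p = p.
Proof.
move=> /tail_ultrasE [up pD _] fD; have ufp := fmap_ultra f up.
apply: (@max_filter _ p up); move=> A pA; have pDA : p (D `&` A) by exact: filterI.
by rewrite fmapE; apply: filterS pDA => u [/fD fu Au]; rewrite /preimage /= fu.
Qed.

Lemma maxpos_ge u e : e \in u -> e.1 <= maxpos u.
Proof. by move=> eu; apply: (@leq_bigmax_seq _ u xpredT (fun e => e.1) e). Qed.

Lemma maxpos_sub u v : {subset u <= v} -> maxpos u <= maxpos v.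
Proof. by move=> uv; apply/bigmax_leqP_seq => e /uv /maxpos_ge. Qed.

End Tails.

Section Reduction.
Variable T : eqType.
Implicit Types (s t u : seq T) (A B : seq T).

Lemma mem_collapse s : {subset collapse s <= s}.
Proof.
elim: s => [|a s IHs] // y.
have sub : y \in collapse (a :: s) -> y \in a :: collapse s.
  rewrite /=; case: (collapse s) => [|b t] //.
  by case: ifP => // _ yt; rewrite inE yt orbT.
by move/sub; rewrite !inE => /predU1P [->|/IHs ->]; rewrite ?eqxx ?orbT.
Qed.

Lemma collapse_cons a s : collapse (a :: s) =
  if collapse s is b :: t then (if a == b then b :: t else a :: b :: t) else [:: a].
Proof. by []. Qed.

Lemma collapse_idem s : collapse (collapse s) = collapse s.
Proof.
elim: s => [|a s IHs] //; rewrite collapse_cons; case E: (collapse s) => [|b t] //.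
case: ifP => [_|ab]; first by rewrite -E.
by rewrite collapse_cons -E IHs E ab.
Qed.

Lemma collapse_cat_collapse s t : collapse (s ++ collapse t) = collapse (s ++ t).
Proof. by elim: s => [|a s IHs] /=; [exact: collapse_idem|rewrite IHs]. Qed.

Lemma size_collapse_cat s t : size (collapse t) <= size (collapse (s ++ t)).
Proof.
elim: s => [|a s IHs] //=; apply: leq_trans IHs _.
by case: (collapse (s ++ t)) => [|b w] //; case: ifP.
Qed.

Lemma reduce_str_cat A B s t :
  reduce_str A B (s ++ reduce_str A B t) = reduce_str A B (s ++ t).
Proof.
rewrite /reduce_str !filter_cat -[in RHS]collapse_cat_collapse; congr (collapse (_ ++ _)).
by apply/all_filterP/allP => y /mem_collapse; rewrite mem_filter => /andP [].
Qed.

Lemma size_reduce_str_cat A B s t :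
  size (reduce_str A B t) <= size (reduce_str A B (s ++ t)).
Proof. by rewrite /reduce_str filter_cat; exact: size_collapse_cat. Qed.

Lemma reduce_str_sub A B s :
  all (fun c => c \in A ++ B) s -> all (fun c => c \in A) (reduce_str A B s).
Proof.
move=> /allP sAB; apply/allP => y /mem_collapse; rewrite mem_filter => /andP [yB ys].
by move: (sAB y ys); rewrite mem_cat (negbTE yB) orbF.
Qed.

End Reduction.

Section LocatedWords.
Variables (T : eqType) (B : seq T) (x : T).
Hypothesis xB : x \notin B.
Local Notation S := (seq (nat * T)).
Implicit Types (u v : S).

Definition located (P : pred T) : set S :=
  [set u | sorted ltn (map fst u) && all (fun e => P e.2) u].

Definition Bword := located (fun c => c \in B).
Definition Bxword := located (fun c => (c \in B) || (c == x)).
Definition xword := Bxword `&` [set u | occurs x u].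

Lemma sorted_cat_tail u v : sorted ltn (map fst u) -> sorted ltn (map fst v) ->
  tail (maxpos u) v -> sorted ltn (map fst (u ++ v)).
Proof.
move=> su sv tv; rewrite map_cat (sorted_pairwise ltn_trans) pairwise_cat.
move: su sv; rewrite !(sorted_pairwise ltn_trans) => -> ->; rewrite !andbT.
apply/allrelP => _ _ /mapP [e eu ->] /mapP [e' ev ->].
exact: leq_ltn_trans (maxpos_ge eu) (allP tv e' ev).
Qed.

Lemma located_cat P : cat_closed (located P) (located P) (located P).
Proof.
move=> u v /andP [su au] /andP [sv av] tv; apply/andP; split; first exact: sorted_cat_tail.
by rewrite all_cat au av.
Qed.

Lemma xword_catl : cat_closed xword Bxword xword.
Proof.
move=> u v [Lu xu] Lv tv; split; first exact: located_cat.
by rewrite /= /occurs has_cat; apply/orP; left.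
Qed.

Lemma xword_catr : cat_closed Bxword xword xword.
Proof.
move=> u v Lu [Lv xv] tv; split; first exact: located_cat.
by rewrite /= /occurs has_cat; apply/orP; right.
Qed.

Lemma xword_cat : cat_closed xword xword xword.
Proof. by move=> u v xu [Lv _] tv; exact: xword_catl. Qed.

Lemma subst_cat c : {morph (subst x)^~ c : u v / u ++ v}.
Proof. by move=> u v; exact: map_cat. Qed.

Lemma tail_subst c N u : tail N u -> tail N (subst x u c).
Proof. by rewrite /tail /= /subst all_map. Qed.

Lemma subst_Bword c u : Bword u -> subst x u c = u.
Proof.
case/andP=> _ /allP uB; rewrite /subst -[RHS]map_id; apply/eq_in_map => -[m a] /uB /= aB.
by case: eqP aB => // ->; rewrite (negbTE xB).
Qed.

Lemma subst_Bxword b u : b \in B -> Bxword u -> Bword (subst x u b).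
Proof.
move=> bB /andP [su /allP uB]; apply/andP; split; first by rewrite /subst -map_comp.
rewrite /subst all_map; apply/allP => e /uB /=.
by case: eqP => // _; rewrite orbF.
Qed.

Lemma Bword_Bxword : Bword `<=` Bxword.
Proof.
move=> u /andP [su uB]; apply/andP; split=> //.
by apply: sub_all uB => e /= ->.
Qed.

Lemma tail_ultras_Bword_nil : tail_ultras Bword (principal_filter [::]).
Proof.
apply/tail_ultrasE; split; first exact: principal_filter_ultra.
  exact/principal_filterP.
by move=> N; exact/principal_filterP.
Qed.

Lemma tail_ultras_xword_neq0 : tail_ultras xword !=set0.
Proof.
have [y [uy Fy]] :=
  ultraFilterLemma (@fmap_proper_filter _ _ (fun N => [:: (N, x)]) _ eventually_filter).
exists y; apply/tail_ultrasE; split=> //.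
  apply: Fy; rewrite fmapE; apply: (filterS _ filterT) => N _.
  by split; rewrite /Bxword /located /occurs /= eqxx ?orbT.
by move=> N; apply: Fy; exists N.+1 => // M /= NM; rewrite /tail /= NM.
Qed.

End LocatedWords.

Lemma idempotent_pair (T : eqType) (B : seq T) (x : T) :
  exists p r, [/\ tail_ultras (Bword B) p, umul p p = p,
    forall e, tail_ultras (Bword B) e -> umul e e = e -> umul e p = e -> umul p e = e -> e = p,
    tail_ultras (xword B x) r & [/\ umul r r = r, umul r p = r & umul p r = r]].
Proof.
have [p [Bp pp p_min]] := @minimal_idempotent _ (Bword B |` range (@tail T))
  (ex_intro _ _ (tail_ultras_Bword_nil B)) (fun y z => tail_ultras_umul (@located_cat _ _)).
have Bxp : tail_ultras (Bxword B x) p := tail_ultrasS (@Bword_Bxword _ B x) Bp.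
have [r [xr rr rp pr]] := @idempotent_below _ (xword B x |` range (@tail T))
  (tail_ultras_xword_neq0 B x) (fun y z => tail_ultras_umul (@xword_cat _ B x)) p
  Bp.1 pp (fun y xy => tail_ultras_umul (@xword_catl _ B x) xy Bxp)
  (fun y xy => tail_ultras_umul (@xword_catr _ B x) Bxp xy).
by exists p, r.
Qed.

Section SubstitutedIdempotents.
Variables (T : eqType) (A B : seq T) (x : T).
Hypothesis xB : x \notin B.
Local Notation S := (seq (nat * T)).
Variables p r : set_system S.
Hypotheses (Bp : tail_ultras (Bword B) p) (pp : umul p p = p)
  (p_min : forall e, tail_ultras (Bword B) e ->
     umul e e = e -> umul e p = e -> umul p e = e -> e = p)
  (xr : tail_ultras (xword B x) r) (rr : umul r r = r) (rp : umul r p = r) (pr : umul p r = r).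

Definition rsubst c := fmap ((subst x)^~ c) r.

Let fmap_subst_p c : fmap ((subst x)^~ c) p = p.
Proof. by apply: fmap_id_on Bp _ => u; exact: subst_Bword. Qed.

Let fmap_subst_umul c y z :
  fmap ((subst x)^~ c) (umul y z) = umul (fmap ((subst x)^~ c) y) (fmap ((subst x)^~ c) z).
Proof. exact/fmap_umul/subst_cat. Qed.

Lemma rsubst_p c : umul (rsubst c) p = rsubst c.
Proof. by rewrite -[in LHS](fmap_subst_p c) -fmap_subst_umul rp. Qed.

Lemma p_rsubst c : umul p (rsubst c) = rsubst c.
Proof. by rewrite -[in LHS](fmap_subst_p c) -fmap_subst_umul pr. Qed.

Lemma rsubst_idem c : umul (rsubst c) (rsubst c) = rsubst c.
Proof. by rewrite -fmap_subst_umul rr. Qed.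

Lemma rsubst_B b : b \in B -> rsubst b = p.
Proof.
move=> bB; apply: p_min; rewrite ?rsubst_idem ?rsubst_p ?p_rsubst //.
have Bxr : tail_ultras (Bxword B x) r by apply: tail_ultrasS xr => u [].
by apply: tail_ultras_fmap Bxr => [u|N u]; [exact: subst_Bxword|exact: tail_subst].
Qed.

Fixpoint rprod (u : seq T) : set_system S :=
  if u is c :: u' then umul (rsubst c) (rprod u') else p.

Lemma rprod1 c : rprod [:: c] = rsubst c.
Proof. exact: rsubst_p. Qed.

Lemma rprod_reduce u : rprod u = rprod (reduce_str A B u).
Proof.
elim: u => [|c u IHu] //=.
have -> : reduce_str A B (c :: u) =
    if c \in B then reduce_str A B u else collapse (c :: [seq c <- u | c \notin B]).
  by rewrite /reduce_str /=; case: (c \in B).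
case: ifPn => [/rsubst_B ->|_].
  rewrite IHu; case: (reduce_str A B u) => [|c' u'] /=; first exact: pp.
  by rewrite -umulA p_rsubst.
rewrite collapse_cons -/(reduce_str A B u) IHu; case: (reduce_str A B u) => [|b w] //.
by case: ifP => [/eqP <-|_] //=; rewrite -umulA rsubst_idem.
Qed.

End SubstitutedIdempotents.

Lemma rprod_ultra (T : eqType) (B : seq T) x p r u :
  tail_ultras (Bword B) p -> tail_ultras (xword B x) r -> UltraFilter (rprod x p r u).
Proof.
move=> /tail_ultrasE [up _ _] /tail_ultrasE [ur _ _].
by elim: u => [|c u IHu] //=; apply: umul_ultra IHu; exact: fmap_ultra.
Qed.

(** * Choosing the sequence *)

Section Enumerations.
Variable T : eqType.

Fixpoint words_upto (X : seq T) k : seq (seq T) :=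
  if k is k'.+1 then [::] :: [seq a :: w | a <- X, w <- words_upto X k'] else [:: [::]].

Lemma mem_words_upto X k w : all (fun a => a \in X) w -> size w <= k -> w \in words_upto X k.
Proof.
elim: k w => [|k IHk] [|a w] //= /andP [aX wX] wk.
by rewrite inE; apply/orP; right; apply: allpairs_f => //; exact: IHk.
Qed.

End Enumerations.

Lemma sorted_rcons_ltn (s : seq nat) j :
  sorted ltn (rcons s j) -> sorted ltn s /\ all (fun i => i < j) s.
Proof.
rewrite (sorted_pairwise ltn_trans) -cats1 pairwise_cat => /and3P [sj ss _].
by split; [rewrite (sorted_pairwise ltn_trans)|move: sj; rewrite allrel1r].
Qed.

Lemma sorted_ltn_size (s : seq nat) m : sorted ltn s -> all (fun i => i < m) s -> size s <= m.
Proof.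
move=> ss sm; rewrite -(size_iota 0 m); apply: uniq_leq_size.
  by apply: sorted_uniq ss; [exact: ltn_trans|exact: ltnn].
by move=> i /(allP sm); rewrite mem_iota.
Qed.

Lemma eq_subst_prod (T : eqType) (x : T) (w1 w2 : nat -> seq (nat * T)) ns cs :
  {in ns, w1 =1 w2} -> subst_prod x w1 ns cs = subst_prod x w2 ns cs.
Proof.
elim: ns cs => [|j ns IHns] [|c cs] w12 //; rewrite /subst_prod /= w12 ?mem_head //.
by congr cat; apply: IHns => i ins; apply: w12; rewrite inE ins orbT.
Qed.

Section Construction.
Variables (T : eqType) (A B : seq T) (x : T) (F : seq (seq T)).
Variables (n : nat) (col : seq (nat * T) -> 'I_n).
Local Notation S := (seq (nat * T)).
Local Notation red := (reduce_str A B).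
Variables (r : set_system S) (Q : seq T -> set_system S) (kappa : seq T -> 'I_n).
Hypotheses (ur : UltraFilter r) (r_xword : r (xword B x)) (r_tail : forall N, r (tail N))
  (Q_cons : forall c u, Q (c :: u) = umul (fmap ((subst x)^~ c) r) (Q u))
  (Q1 : forall c, Q [:: c] = fmap ((subst x)^~ c) r)
  (Q_reduce : forall u, Q u = Q (red u))
  (Q_kappa : forall s, Q s (col @^-1` [set kappa s])).

(* [Q u] stands for r_(u_0) ... r_(u_k) p. *)
Local Notation colored s := (col @^-1` [set kappa s]).
Local Notation prodw prev := (subst_prod x (nth [::] prev)).

Definition admissible m ns cs :=
  [&& sorted ltn ns, all (fun i => i < m) ns, size cs == size ns & all (fun c => c \in A ++ B) cs].

Lemma admissible_succ m ns cs : admissible m.+1 ns cs -> admissible m ns cs \/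
  exists ns0 cs0 c, [/\ ns = rcons ns0 m, cs = rcons cs0 c, admissible m ns0 cs0 & c \in A ++ B].
Proof.
case/and4P; case/lastP: ns => [|ns0 j] sns nsm /eqP scs csAB.
  by left; apply/and4P; split; rewrite // scs.
have [sns0 ns0j] := sorted_rcons_ltn sns; move: nsm; rewrite all_rcons ltnS leq_eqVlt.
case/andP=> /predU1P [jm|jm] _.
  subst j.
  case/lastP: cs scs csAB => [|cs0 c]; first by rewrite size_rcons.
  rewrite !size_rcons all_rcons => -[scs] /andP [cAB csAB]; right; exists ns0, cs0, c.
  by split=> //; apply/and4P; split=> //; apply/eqP.
left; apply/and4P; split=> //; rewrite ?scs // all_rcons jm /=.
by apply/allP => i /(allP ns0j) ij; exact: ltn_trans ij jm.
Qed.

Lemma prodw_rcons prev v ns cs : all (fun i => i < size prev) ns ->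
  prodw (rcons prev v) ns cs = prodw prev ns cs.
Proof. by move=> /allP nsp; apply: eq_subst_prod => i /nsp ip; rewrite nth_rcons ip. Qed.

Lemma prodw_rcons_last prev v ns cs c : size cs = size ns -> all (fun i => i < size prev) ns ->
  prodw (rcons prev v) (rcons ns (size prev)) (rcons cs c) = prodw prev ns cs ++ subst x v c.
Proof.
move=> scs nsp; rewrite /subst_prod zip_rcons // map_rcons flatten_rcons /=.
by rewrite nth_rcons ltnn eqxx; congr cat; exact: prodw_rcons.
Qed.

Definition extendable prev := forall ns cs u,
  admissible (size prev) ns cs -> all (fun c => c \in A ++ B) u -> red (cs ++ u) \in F ->
  Q u [set z | colored (red (cs ++ u)) (prodw prev ns cs ++ z)].

Definition colored_prefix prev := forall ns cs,
  admissible (size prev) ns cs -> ns != [::] -> red cs \in F ->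
  colored (red cs) (prodw prev ns cs).

Lemma extendable_nil : extendable [::].
Proof.
move=> ns cs u /and4P [_ ns0 /eqP scs _] _ _.
have ns_nil : ns = [::] by case: ns ns0 {scs}.
by move: scs; rewrite ns_nil => /size0nil ->; rewrite Q_reduce; exact: Q_kappa.
Qed.

Lemma extendable_large prev ns cs c u : extendable prev -> admissible (size prev) ns cs ->
  c \in A ++ B -> all (fun a => a \in A) u -> red (cs ++ c :: u) \in F ->
  r [set v | Q u [set z | colored (red (cs ++ c :: u)) (prodw prev ns cs ++ subst x v c ++ z)]].
Proof.
move=> ext adm cAB uA csuF.
have cuAB : all (fun a => a \in A ++ B) (c :: u).
  by rewrite /= cAB; apply: sub_all uA => a /= aA; rewrite mem_cat aA.
have redAB : all (fun a => a \in A ++ B) (red (c :: u)).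
  by apply: sub_all (reduce_str_sub cuAB) => a /= aA; rewrite mem_cat aA.
have := ext ns cs _ adm redAB; rewrite reduce_str_cat -Q_reduce Q_cons => /(_ csuF).
by rewrite /umul /= => h; apply: filterS h.
Qed.

Lemma colored_large prev ns cs c : extendable prev -> admissible (size prev) ns cs ->
  c \in A ++ B -> red (rcons cs c) \in F ->
  r [set v | colored (red (rcons cs c)) (prodw prev ns cs ++ subst x v c)].
Proof.
move=> ext adm cAB; rewrite -cats1 => csF.
have cAB' : all (fun a => a \in A ++ B) [:: c] by rewrite /= cAB.
by have := ext ns cs _ adm cAB' csF; rewrite Q1.
Qed.

(* Completions u only matter through their reduced string, an A-string no
   longer than L; this keeps the conditions on the next word finite. *)
Let L := \max_(s <- F) size s.

Definition next_word prev v := [/\ xword B x v, tail (maxpos (flatten prev)) v,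
  forall ns cs c u, admissible (size prev) ns cs -> c \in A ++ B ->
    all (fun a => a \in A) u -> size u <= L -> red (cs ++ c :: u) \in F ->
    Q u [set z | colored (red (cs ++ c :: u)) (prodw prev ns cs ++ subst x v c ++ z)] &
  forall ns cs c, admissible (size prev) ns cs -> c \in A ++ B -> red (rcons cs c) \in F ->
    colored (red (rcons cs c)) (prodw prev ns cs ++ subst x v c)].

Lemma admissible_enum m ns cs : admissible m ns cs ->
  ns \in words_upto (iota 0 m) m /\ cs \in words_upto (A ++ B) m.
Proof.
case/and4P=> sns nsm /eqP scs csAB; have nsm' := sorted_ltn_size sns nsm.
split; apply: mem_words_upto; rewrite ?scs //.
by apply: sub_all nsm => i /= im; rewrite mem_iota.
Qed.

Lemma next_word_exists prev : extendable prev -> exists v, next_word prev v.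
Proof.
move=> ext; set m := size prev.
pose Ns := words_upto (iota 0 m) m; pose Cs := words_upto (A ++ B) m.
have large_ext : r [set v | {in Ns, forall ns, {in Cs, forall cs, {in A ++ B, forall c,
    {in words_upto A L, forall u, admissible m ns cs /\ all (fun a => a \in A) u ->
    red (cs ++ c :: u) \in F ->
    Q u [set z | colored (red (cs ++ c :: u)) (prodw prev ns cs ++ subst x v c ++ z)]}}}}].
  do 4 apply: filter_all_in => ? ?.
  by apply: filter_imply => -[adm uA]; apply: filter_imply; apply: extendable_large.
have large_col : r [set v | {in Ns, forall ns, {in Cs, forall cs, {in A ++ B, forall c,
    admissible m ns cs -> red (rcons cs c) \in F ->
    colored (red (rcons cs c)) (prodw prev ns cs ++ subst x v c)}}}].
  do 3 apply: filter_all_in => ? ?.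
  by apply: filter_imply => adm; apply: filter_imply; apply: colored_large.
have [v [[[xv tv] ext_v] col_v]] := filter_ex (filterI (filterI (filterI r_xword
  (r_tail (maxpos (flatten prev)))) large_ext) large_col).
exists v; split=> // [ns cs c u adm cAB uA uL|ns cs c adm cAB];
  have [nsN csC] := admissible_enum adm.
  by apply: ext_v => //; exact: mem_words_upto.
exact: col_v.
Qed.

Lemma extendable_rcons prev v : extendable prev -> next_word prev v -> extendable (rcons prev v).
Proof.
move=> ext [_ _ ext_v _] ns cs u; rewrite size_rcons.
case/admissible_succ=> [adm|[ns0 [cs0 [c [-> -> adm cAB]]]]] uAB csuF.
  by rewrite prodw_rcons; [exact: ext|case/and4P: adm].
case/and4P: (adm) => _ ns0m /eqP scs _; rewrite prodw_rcons_last // Q_reduce.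
under eq_set => z do rewrite -catA.
have red_u : red (cs0 ++ c :: red u) = red (rcons cs0 c ++ u) by rewrite -cat_rcons reduce_str_cat.
have := ext_v ns0 cs0 c (red u) adm cAB (reduce_str_sub uAB); rewrite red_u.
have uL : size (red u) <= L.
  apply: leq_trans (@size_reduce_str_cat _ A B (rcons cs0 c) u) _.
  by apply: (@leq_bigmax_seq _ F xpredT size) => //; rewrite -red_u.
by move=> /(_ uL csuF).
Qed.

Lemma colored_prefix_rcons prev v :
  colored_prefix prev -> next_word prev v -> colored_prefix (rcons prev v).
Proof.
move=> colp [_ _ _ col_v] ns cs; rewrite size_rcons.
case/admissible_succ=> [adm|[ns0 [cs0 [c [-> -> adm cAB]]]]] nsn csF.
  by rewrite prodw_rcons; [exact: colp|case/and4P: adm].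
case/and4P: (adm) => _ ns0m /eqP scs _; rewrite prodw_rcons_last //.
exact: col_v.
Qed.

Lemma colored_prefix_nil : colored_prefix [::].
Proof. by case=> [|i ns] cs // /and4P []. Qed.

Local Notation prefix w k := (map w (iota 0 k)).

Lemma next_word_sequence : exists w : nat -> S, forall k,
  [/\ extendable (prefix w k), colored_prefix (prefix w k) & next_word (prefix w k) (w k)].
Proof.
have [g gP] : {g : seq S -> S & forall prev, extendable prev -> next_word prev (g prev)}.
  apply: (@choice _ _ (fun prev v => extendable prev -> next_word prev v)) => prev.
  have [ext|next] := pselect (extendable prev); last by exists [::] => /next.
  by have [v] := next_word_exists ext; exists v.
pose prev_of k := iter k (fun prev => rcons prev (g prev)) [::].
have prevE k : prev_of k = prefix (fun i => g (prev_of i)) k.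
  by elim: k => // k IHk; rewrite -addn1 iotaD map_cat -IHk addn1 /= cats1.
have prev_inv k : extendable (prev_of k) /\ colored_prefix (prev_of k).
  elim: k => [|k [ext colp]]; first by split; [exact: extendable_nil|exact: colored_prefix_nil].
  by have nw := gP _ ext; split; [exact: extendable_rcons|exact: colored_prefix_rcons].
exists (fun i => g (prev_of i)) => k; rewrite -prevE.
by have [ext colp] := prev_inv k; split=> //; exact: gP.
Qed.

Lemma next_word_basic (w : nat -> S) : (forall k, next_word (prefix w k) (w k)) ->
  basic_seq x B w /\ forall i, occurs x (w i).
Proof.
move=> w_next; have w_x i : occurs x (w i) by have [[_ xi] _ _ _] := w_next i.
have w_Bx s : sorted ltn s -> Bxword B x (flatten (map w s)).
  elim/last_ind: s => [|s j IHs] // /sorted_rcons_ltn [ss sj].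
  have [[wBx _] wt _ _] := w_next j; rewrite map_rcons flatten_rcons.
  apply: located_cat (IHs ss) wBx _; apply: sub_all wt => e /=; apply: leq_ltn_trans.
  apply: maxpos_sub => e' /flattenP [_ /mapP [i si ->] ei]; apply/flattenP; exists (w i) => //.
  by rewrite map_f // mem_iota /= (allP sj).
have located_Bx u : u != [::] -> Bxword B x u -> located_word x B u.
  by move=> u0 /andP [su au]; apply/and3P.
split=> //; split=> [i|[//|j s] _ ss]; apply: located_Bx.
- by case: (w i) (w_x i).
- by have [[wBx _] _ _ _] := w_next i.
- by rewrite /=; case: (w j) (w_x j).
- exact: (w_Bx (j :: s) ss).
Qed.

Lemma located_sequence : exists w : nat -> S,
  [/\ basic_seq x B w, forall i, occurs x (w i) &
  forall ns cs, ns != [::] -> sorted ltn ns -> size cs = size ns ->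
    all (fun c => c \in A ++ B) cs -> red cs \in F -> col (subst_prod x w ns cs) = kappa (red cs)].
Proof.
have [w wP] := next_word_sequence.
have [w_basic w_x] : basic_seq x B w /\ forall i, occurs x (w i).
  by apply: next_word_basic => k; case: (wP k).
exists w; split=> // ns cs ns0 sns scs csAB csF; set m := (\max_(i <- ns) i).+1.
have nsm : all (fun i => i < m) ns.
  by apply/allP => i ins; rewrite ltnS; exact: (@leq_bigmax_seq _ ns xpredT id i).
have adm : admissible (size (prefix w m)) ns cs.
  by rewrite size_map size_iota; apply/and4P; split=> //; apply/eqP.
have [_ colp _] := wP m; rewrite -(colp ns cs adm ns0 csF); congr col.
apply: eq_subst_prod => i /(allP nsm) im.
by rewrite (nth_map 0) ?size_iota // nth_iota.
Qed.

End Construction.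

Local Close Scope classical_set_scope.

Theorem mainTheorem20 (T : eqType) (A B : seq T) (x : T)
  (hAB : forall a, a \in A -> a \notin B)
  (hx : x \notin A ++ B)
  (F : seq (seq T)) (hF : all (reduced_in A) F)
  (r : nat) (col : seq (nat * T) -> 'I_r) :
  exists w : nat -> seq (nat * T),
    basic_seq x B w /\ (forall i, occurs x (w i)) /\
    (forall (ns ns' : seq nat) (cs cs' : seq T),
       ns != [::] -> sorted ltn ns -> size cs = size ns ->
       all (fun c => c \in A ++ B) cs ->
       ns' != [::] -> sorted ltn ns' -> size cs' = size ns' ->
       all (fun c => c \in A ++ B) cs' ->
       reduce_str A B cs = reduce_str A B cs' ->
       reduce_str A B cs \in F ->
       col (subst_prod x w ns cs) = col (subst_prod x w ns' cs')).
Proof.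
have xB : x \notin B by move: hx; rewrite mem_cat negb_or => /andP [].
have [p [q [Bp pp p_min xq [qq qp pq]]]] := idempotent_pair B x.
have [kappa kappaP] := choice (fun s => ultra_color col (rprod_ultra s Bp xq)).
have [uq q_x q_tail] := (tail_ultrasE _ _).1 xq.
have [w [w_basic w_x w_col]] := located_sequence F uq q_x q_tail (fun c u => erefl)
  (rprod1 xB Bp qp) (rprod_reduce A xB Bp pp p_min xq qq qp pq) kappaP.
exists w; split=> //; split=> // ns ns' cs cs' ns0 sns scs csAB ns0' sns' scs' csAB' red_eq csF.
by rewrite !w_col // -red_eq.
Qed.
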